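(* Let ${\bf F}=(F_1,F_2,F_3)$ be a triple of flags in $\mathcal F(\mathbb C^d)$ in general position satisfying property-$\star$, and let $\mathrm{Stab}(F_1,F_2)\subset\mathrm{SL}_d(\mathbb C)$ be the stabilizer of the ordered pair $(F_1,F_2)$. For $B\in\mathrm{Stab}(F_1,F_2)$ and $i\in\{1,\dots,d\}$ let $\mu_i(B)$ be the eigenvalue of $B$ on the line $F_2^i\cap F_1^{d-i+1}$. Then: (1) a sequence $(B_n)$ in $\mathrm{Stab}(F_1,F_2)$ satisfies $B_n^{-1}\cdot F_3\to F_1$ if and only if $\max_{1\le i\le d-1}|\mu_{i+1}(B_n)/\mu_i(B_n)|\to0$; (2) there is $C>0$ such that for every sequence $(B_n)$ in $\mathrm{Stab}(F_1,F_2)$ with $B_n^{-1}\cdot F_3\to F_1$, for all sufficiently large $n$, \[C^{-1}\max_{i}\Big|\frac{\mu_{i+1}(B_n)}{\mu_i(B_n)}\Big|\le d_{\mathcal F}(B_n^{-1}\cdot F_3,F_1)\le C\max_i\Big|\frac{\mu_{i+1}(B_n)}{\mu_i(B_n)}\Big|.\]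
   Context: $\mathcal F(\mathbb C^d)$ is the space of complete flags with a fixed Riemannian distance $d_{\mathcal F}$. Flags $F,G$ are transverse if $F^j+G^{d-j}=\mathbb C^d$ for all $j$; $F_1,F_2,F_3$ are in general position if $F_1^{k_1}+F_2^{k_2}+F_3^{k_3}=\mathbb C^d$ for all positive integers $k_i$ summing to $d$. A triple $(F_1,F_2,F_3)$ satisfies property-$\star$ if (1) $F_1,F_2$ and $F_2,F_3$ are transverse pairs, and (2) with $L_i=F_2^i\cap F_1^{d-i+1}$ and $\pi_i:\mathbb C^d\to L_i$ the projection with kernel $\bigoplus_{j\ne i}L_j$, for every $i\in\{1,\dots,d-1\}$ the restriction of $\pi_i$ to the line $F_2^{i+1}\cap F_3^{d-i}$ is an isomorphism onto $L_i$. *)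

From HB Require Import structures.
From mathcomp Require Import all_boot all_order all_algebra.
From mathcomp Require Import complex.
From mathcomp Require Import all_classical all_reals all_analysis.

Set Implicit Arguments.
Unset Strict Implicit.
Unset Printing Implicit Defensive.

Import Order.TTheory GRing.Theory Num.Theory.
Local Open Scope ring_scope.

Section Flags.
Variables (R : realType) (d : nat).
Local Notation C := R[i].

(* Conventions:
   - C^d is the space of row vectors 'rV[C]_d; a linear subspace U of C^d is
     represented by a d x d matrix whose row space is U (mxalgebra, %MS).
   - a matrix g acts on C^d by x |-> g x (column-vector convention), i.e. on
     row vectors by x |-> x *m g^T; hence g . U is the row space of U *m g^T. *)
Definition act (g : 'M[C]_d) (U : 'M[C]_d) : 'M[C]_d := U *m g^T.

Definition flag := nat -> 'M[C]_d.

Definition is_flag (F : flag) : Prop :=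
  (forall j, (j <= d)%N -> \rank (F j) = j) /\
  (forall j, (j < d)%N -> (F j <= F j.+1)%MS).

Definition act_flag (g : 'M[C]_d) (F : flag) : flag := fun j => act g (F j).

Definition transverse (F G : flag) : Prop :=
  forall j, (j <= d)%N -> row_full (F j + G (d - j)%N)%MS.

Definition general_position (F1 F2 F3 : flag) : Prop :=
  forall k1 k2 k3, (0 < k1)%N -> (0 < k2)%N -> (0 < k3)%N ->
    (k1 + k2 + k3 = d)%N -> row_full (F1 k1 + F2 k2 + F3 k3)%MS.

Definition Lline (F1 F2 : flag) (i : nat) : 'M[C]_d :=
  (F2 i :&: F1 (d - i)%N.+1)%MS.

Definition Lproj (F1 F2 : flag) (i : nat) : 'M[C]_d :=
  proj_mx (Lline F1 F2 i) (\sum_(1 <= j < d.+1 | j != i) Lline F1 F2 j)%MS.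

Definition property_star (F1 F2 F3 : flag) : Prop :=
  transverse F1 F2 /\ transverse F2 F3 /\
  forall i, (1 <= i < d)%N ->
    let M := (F2 i.+1 :&: F3 (d - i)%N)%MS in
    (* the restriction of pi_i to the line M is an isomorphism onto L_i:
       its image is L_i and it is injective on M *)
    (M *m Lproj F1 F2 i == Lline F1 F2 i)%MS /\
    \rank (M *m Lproj F1 F2 i) = \rank M.

Definition in_Stab (F1 F2 : flag) (B : 'M[C]_d) : Prop :=
  \det B = 1 /\
  forall j, (j <= d)%N ->
    (act B (F1 j) == F1 j)%MS /\ (act B (F2 j) == F2 j)%MS.

Definition eigval_on (B : 'M[C]_d) (L : 'M[C]_d) (mu : C) : Prop :=
  forall v : 'rV[C]_d, (v <= L)%MS -> v *m B^T = mu *: v.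

Definition ctrmx m n (A : 'M[C]_(m, n)) : 'M[C]_(n, m) := (map_mx conjc A)^T.

Definition oproj (U : 'M[C]_d) : 'M[C]_d :=
  let A := row_base U in ctrmx A *m invmx (A *m ctrmx A) *m A.

Definition cabs (z : C) : R := @ComplexField.Normc.normc R z.

Definition frob (A : 'M[C]_d) : R :=
  Num.sqrt (\sum_(a < d) \sum_(b < d) cabs (A a b) ^+ 2).

Definition distF (F G : flag) : R :=
  \sum_(j < d.+1) frob (oproj (F j) - oproj (G j)).

Definition max_ratio (mu : nat -> C) : R :=
  \big[Num.max/0]_(1 <= i < d) cabs (mu i.+1 / mu i).

End Flags.

(* Let [S] be the basis adapted to the lines [L_i = F2^i :&: F1^(d-i+1)].  Every
   [B] in Stab(F1, F2) is diagonal in it, [F1^k] is spanned by its last [k]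
   vectors, and transversality of [F3^k] with [F2^(d-k)] puts [F3^k] in the
   affine chart around [F1^k]: [F3^k] is the row space of [(X + J) S] with [X]
   supported on the first [d - k] columns.  The chart coordinates of
   [B^-1 F3^k] are [X r j * mu_(d-k+r+1) / mu_(j+1)], each a product of
   consecutive ratios [mu_(l+1) / mu_l].  Near [F1^k] the orthogonal projector
   is bi-Lipschitz in the chart coordinates, so the distance of the flags is
   at most a multiple of the largest ratio.  Conversely, property-star says
   that for [k = d - i] the coordinate coupling [L_(i+1)] with [L_i] is
   nonzero; it gets scaled by [mu_(i+1) / mu_i], which bounds that ratio by
   the distance.  Finitely many [k] make all constants uniform. *)

From mathcomp Require Import all_boot all_order all_algebra.
From mathcomp Require Import complex.
From mathcomp Require Import all_classical all_reals all_analysis.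
From mathcomp Require Import lra zify.
Import Order.TTheory GRing.Theory Num.Theory.
Import numFieldNormedType.Exports.
Set Implicit Arguments.
Unset Strict Implicit.
Unset Printing Implicit Defensive.
Local Open Scope ring_scope.

Section EntrywiseNorm.
Variable R : realType.
Local Notation C := R[i].

Lemma cabs_ge0 (z : C) : 0 <= cabs z.
Proof. by case: z => a b; rewrite /cabs /= sqrtr_ge0. Qed.

Lemma cabs0 : cabs (0 : C) = 0.
Proof. exact: ComplexField.Normc.normc0. Qed.

Lemma cabs1 : cabs (1 : C) = 1.
Proof. exact: ComplexField.Normc.normc1. Qed.

Lemma cabsD (x y : C) : cabs (x + y) <= cabs x + cabs y.
Proof. exact: le_normcD. Qed.

Lemma cabsM (x y : C) : cabs (x * y) = cabs x * cabs y.
Proof. exact: ComplexField.Normc.normcM. Qed.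

Lemma cabsN (x : C) : cabs (- x) = cabs x.
Proof. exact: normcN. Qed.

Lemma cabs_eq0 (x : C) : (cabs x == 0) = (x == 0).
Proof.
by apply/eqP/eqP => [/ComplexField.Normc.eq0_normc | ->] //; rewrite cabs0.
Qed.

Lemma cabs_conjc (x : C) : cabs (conjc x) = cabs x.
Proof. by case: x => a b; rewrite /cabs /= sqrrN. Qed.

Lemma cabs_sum (I : Type) (r : seq I) (P : pred I) (F : I -> C) :
  cabs (\sum_(i <- r | P i) F i) <= \sum_(i <- r | P i) cabs (F i).
Proof.
elim/big_rec2: _ => [|i y1 y2 _ IH]; first by rewrite cabs0.
by apply: le_trans (cabsD _ _) _; rewrite lerD2l.
Qed.

Lemma ler_sum_term (I : finType) (F : I -> R) (i : I) :
  (forall j, 0 <= F j) -> F i <= \sum_j F j.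
Proof. by move=> F_ge0; rewrite (bigD1 i) //= lerDl sumr_ge0. Qed.

Lemma sum_sqr_le_sqr_sum (I : Type) (r : seq I) (P : pred I) (F : I -> R) :
  (forall i, 0 <= F i) ->
  \sum_(i <- r | P i) F i ^+ 2 <= (\sum_(i <- r | P i) F i) ^+ 2.
Proof.
move=> F_ge0.
suff [] : 0 <= \sum_(i <- r | P i) F i /\
          \sum_(i <- r | P i) F i ^+ 2 <= (\sum_(i <- r | P i) F i) ^+ 2 by [].
elim/big_rec2: _ => [|i y1 y2 _ [y2_ge0 IH]]; first by rewrite expr0n.
have := F_ge0 i; split; [exact: addr_ge0 | nra].
Qed.

Definition l1norm m n (A : 'M[C]_(m, n)) : R :=
  \sum_(i < m) \sum_(j < n) cabs (A i j).

Lemma l1norm_ge0 m n (A : 'M[C]_(m, n)) : 0 <= l1norm A.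
Proof. by do 2![apply: sumr_ge0 => ? _]; apply: cabs_ge0. Qed.

Lemma l1normD m n (A B : 'M[C]_(m, n)) : l1norm (A + B) <= l1norm A + l1norm B.
Proof.
rewrite /l1norm -big_split; apply: ler_sum => i _.
by rewrite -big_split; apply: ler_sum => j _; rewrite mxE cabsD.
Qed.

Lemma l1normN m n (A : 'M[C]_(m, n)) : l1norm (- A) = l1norm A.
Proof. by do 2![apply: eq_bigr => ? _]; rewrite mxE cabsN. Qed.

Lemma l1normB m n (A B : 'M[C]_(m, n)) : l1norm (A - B) <= l1norm A + l1norm B.
Proof. by rewrite -(l1normN B) l1normD. Qed.

Lemma l1norm_row m n (A : 'M[C]_(m, n)) i : \sum_j cabs (A i j) <= l1norm A.
Proof.
rewrite /l1norm.
apply: (@ler_sum_term _ (fun k => \sum_j cabs (A k j))) => k.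
by apply: sumr_ge0 => l _; apply: cabs_ge0.
Qed.

Lemma cabs_le_l1norm m n (A : 'M[C]_(m, n)) i j : cabs (A i j) <= l1norm A.
Proof.
apply: le_trans (l1norm_row A i).
exact: (@ler_sum_term _ (fun l => cabs (A i l))) (fun l => cabs_ge0 _).
Qed.

Lemma l1normM m n p (A : 'M[C]_(m, n)) (B : 'M[C]_(n, p)) :
  l1norm (A *m B) <= l1norm A * l1norm B.
Proof.
rewrite /l1norm mulr_suml; apply: ler_sum => i _.
apply: (@le_trans _ _ (\sum_(j < p) \sum_(l < n) cabs (A i l) * cabs (B l j))).
  apply: ler_sum => j _; rewrite mxE; apply: le_trans (cabs_sum _ _ _) _.
  by apply: ler_sum => l _; rewrite cabsM.
rewrite exchange_big mulr_suml; apply: ler_sum => l _.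
by rewrite -mulr_sumr ler_wpM2l ?cabs_ge0 ?l1norm_row.
Qed.

Lemma l1normM3 m n p q (A : 'M[C]_(m, n)) (B : 'M[C]_(n, p)) (D : 'M[C]_(p, q)) :
  l1norm (A *m B *m D) <= l1norm A * l1norm B * l1norm D.
Proof.
apply: le_trans (l1normM _ _) _.
by rewrite ler_wpM2r ?l1norm_ge0 ?l1normM.
Qed.

Lemma l1norm_ctrmx m n (A : 'M[C]_(m, n)) : l1norm (ctrmx A) = l1norm A.
Proof.
rewrite /l1norm exchange_big; do 2![apply: eq_bigr => ? _].
by rewrite !mxE cabs_conjc.
Qed.

Lemma l1norm1 n : l1norm (1%:M : 'M[C]_n) = n%:R.
Proof.
rewrite /l1norm (eq_bigr (fun _ => 1)) ?sumr_const ?card_ord // => i _.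
rewrite (bigD1 i) //= big1 ?addr0 => [|j /negPf ji]; rewrite mxE.
  by rewrite eqxx cabs1.
by rewrite eq_sym ji cabs0.
Qed.

Lemma frob_ge0 d (A : 'M[C]_d) : 0 <= frob A.
Proof. exact: sqrtr_ge0. Qed.

Lemma frob_le_l1norm d (A : 'M[C]_d) : frob A <= l1norm A.
Proof.
rewrite /frob -(ger0_norm (l1norm_ge0 A)) -sqrtr_sqr ler_wsqrtr //.
apply: (@le_trans _ _ (\sum_(i < d) (\sum_(j < d) cabs (A i j)) ^+ 2)).
  by apply: ler_sum => i _; apply: sum_sqr_le_sqr_sum => j; apply: cabs_ge0.
by apply: sum_sqr_le_sqr_sum => i; apply: sumr_ge0 => j _; apply: cabs_ge0.
Qed.

Lemma cabs_le_frob d (A : 'M[C]_d) i j : cabs (A i j) <= frob A.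
Proof.
rewrite /frob -(ger0_norm (cabs_ge0 (A i j))) -sqrtr_sqr ler_wsqrtr //.
have entry_sqr_ge0 k l : 0 <= cabs (A k l) ^+ 2 by apply: sqr_ge0.
apply: (@le_trans _ _ (\sum_l cabs (A i l) ^+ 2)).
  exact: (@ler_sum_term _ (fun l => cabs (A i l) ^+ 2)).
by apply: (@ler_sum_term _ (fun k => \sum_l cabs (A k l) ^+ 2)) => k; apply: sumr_ge0.
Qed.

Lemma l1norm_le_frob d (A : 'M[C]_d) : l1norm A <= (d * d)%:R * frob A.
Proof.
apply: (@le_trans _ _ (\sum_(i < d) \sum_(j < d) frob A)).
  by do 2![apply: ler_sum => ? _]; apply: cabs_le_frob.
by rewrite !sumr_const !card_ord -mulrnA mulr_natl.
Qed.

End EntrywiseNorm.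

Section OrthogonalProjection.
Variable R : realType.
Local Notation C := R[i].

Lemma ctrmxM m n p (A : 'M[C]_(m, n)) (B : 'M[C]_(n, p)) :
  ctrmx (A *m B) = ctrmx B *m ctrmx A.
Proof. by rewrite /ctrmx map_mxM trmx_mul. Qed.

Lemma ctrmxD m n (A B : 'M[C]_(m, n)) : ctrmx (A + B) = ctrmx A + ctrmx B.
Proof. by apply/matrixP => i j; rewrite !mxE rmorphD. Qed.

Lemma rV_ctrmx_eq0 n (w : 'rV[C]_n) : w *m ctrmx w = 0 -> w = 0.
Proof.
move=> /matrixP /(_ 0 0); rewrite !mxE => w_w0.
have : \sum_j `|w 0 j| ^+ 2 = 0.
  by rewrite -[RHS]w_w0; apply: eq_bigr => j _; rewrite sqr_normc !mxE.
move=> /psumr_eq0P w0; apply/rowP => j.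
by apply/eqP; rewrite mxE -normr_eq0 -sqrf_eq0 w0 ?sqr_ge0.
Qed.

Lemma gram_unitmx k n (A : 'M[C]_(k, n)) : row_free A -> A *m ctrmx A \in unitmx.
Proof.
move=> fA; rewrite -row_free_unit; apply: inj_row_free => v vG0.
have /rV_ctrmx_eq0/eqP : (v *m A) *m ctrmx (v *m A) = 0.
  by rewrite ctrmxM !mulmxA -(mulmxA v) vG0 !mul0mx.
by rewrite mulmx_free_eq0 // => /eqP.
Qed.

(* The orthogonal projector onto the row space of [A]; for [A] not row-free
   the Gram matrix is singular and [invmx] makes this junk. *)
Definition orthoproj k n (A : 'M[C]_(k, n)) : 'M[C]_n :=
  ctrmx A *m invmx (A *m ctrmx A) *m A.

Section RowFree.
Variables (k n : nat) (A : 'M[C]_(k, n)).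
Hypothesis fA : row_free A.

Lemma mulmx_orthoproj : A *m orthoproj A = A.
Proof. by rewrite /orthoproj !mulmxA mulmxV ?gram_unitmx // mul1mx. Qed.

Lemma orthoproj_ctrmx : orthoproj A *m ctrmx A = ctrmx A.
Proof. by rewrite /orthoproj -!mulmxA mulVmx ?gram_unitmx // mulmx1. Qed.

Lemma orthoproj_idem : orthoproj A *m orthoproj A = orthoproj A.
Proof. by rewrite {1}/orthoproj -mulmxA mulmx_orthoproj. Qed.

Lemma orthoproj_unique (P : 'M[C]_n) :
  (P <= A)%MS -> P *m ctrmx A = ctrmx A -> P = orthoproj A.
Proof.
move=> sPA PA; have /submxP [D DA] : (P - orthoproj A <= A)%MS.
  by rewrite addmx_sub // eqmx_opp submxMl.
have /eqP : D *m (A *m ctrmx A) = 0.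
  by rewrite mulmxA -DA mulmxBl PA orthoproj_ctrmx subrr.
rewrite mulmx_free_eq0 ?row_free_unit ?gram_unitmx // => /eqP D0.
by apply/eqP; rewrite -subr_eq0 DA D0 mul0mx.
Qed.

End RowFree.

Lemma l1norm_orthoproj_compl k n (A : 'M[C]_(k, n)) :
  l1norm (1%:M - orthoproj A)
  <= n%:R + l1norm A * l1norm (invmx (A *m ctrmx A)) * l1norm A.
Proof.
apply: le_trans (l1normB _ _) _; rewrite l1norm1 lerD2l.
by apply: le_trans (l1normM3 _ _ _) _; rewrite l1norm_ctrmx.
Qed.

Lemma eqmx_orthoproj k1 k2 n (A : 'M[C]_(k1, n)) (B : 'M[C]_(k2, n)) :
  row_free A -> row_free B -> (A == B)%MS -> orthoproj A = orthoproj B.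
Proof.
move=> fA fB /andP [sAB sBA]; apply: esym; apply: orthoproj_unique => //.
  exact: submx_trans (submxMl _ _) sBA.
by have /submxP [D ->] := sAB; rewrite ctrmxM mulmxA orthoproj_ctrmx.
Qed.

Lemma oprojE d k (U : 'M[C]_d) (A : 'M[C]_(k, d)) :
  row_free A -> (A == U)%MS -> oproj U = orthoproj A.
Proof.
move=> fA AU; apply: eqmx_orthoproj => //; first exact: row_base_free.
by apply/eqmxP; apply: eqmx_trans (eq_row_base U) (eqmx_sym (eqmxP AU)).
Qed.

End OrthogonalProjection.

Section Perturbation.
Variable R : realType.
Local Notation C := R[i].

Lemma l1norm_invmx_perturb k (G G0 : 'M[C]_k) :
  G \in unitmx -> G0 \in unitmx ->
  l1norm (G - G0) * l1norm (invmx G0) <= 1 / 2 ->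
  l1norm (invmx G) <= 2 * l1norm (invmx G0).
Proof.
move=> uG uG0 small.
have GiE : invmx G = invmx G0 - invmx G *m (G - G0) *m invmx G0.
  rewrite mulmxBr mulmxBl mulVmx // mul1mx -mulmxA mulmxV // mulmx1.
  by rewrite opprB addrC subrK.
have Gi_ge0 := l1norm_ge0 (invmx G).
have : l1norm (invmx G) <=
       l1norm (invmx G0) + l1norm (invmx G) * (l1norm (G - G0) * l1norm (invmx G0)).
  rewrite {1}GiE mulrA; apply: le_trans (l1normB _ _) _.
  by rewrite lerD2l l1normM3.
have : l1norm (invmx G) * (l1norm (G - G0) * l1norm (invmx G0)) <=
       l1norm (invmx G) * (1 / 2) by rewrite ler_wpM2l.
lra.
Qed.

Variables (k n : nat) (A0 : 'M[C]_(k, n)).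
Hypothesis fA0 : row_free A0.
Local Notation P0 := (orthoproj A0).

Lemma orthoproj_addr_sub (E : 'M[C]_(k, n)) : row_free (A0 + E) ->
  orthoproj (A0 + E) - P0 =
    ctrmx (A0 + E) *m invmx ((A0 + E) *m ctrmx (A0 + E)) *m E *m (1%:M - P0)
  + (1%:M - orthoproj (A0 + E)) *m ctrmx E *m (invmx (A0 *m ctrmx A0) *m A0).
Proof.
move=> fA; set A := A0 + E; set P := orthoproj A.
have -> : P - P0 = P *m (1%:M - P0) - (1%:M - P) *m P0.
  by rewrite mulmxBr mulmxBl mulmx1 mul1mx opprB addrA subrK.
have AQ0 : A *m (1%:M - P0) = E *m (1%:M - P0).
  by rewrite /A mulmxDl mulmxBr mulmx_orthoproj // mulmx1 subrr add0r.
have QA : (1%:M - P) *m ctrmx A = 0.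
  by rewrite mulmxBl mul1mx orthoproj_ctrmx // subrr.
have A0h : ctrmx A0 = ctrmx A - ctrmx E by rewrite /A ctrmxD addrK.
have P0E : P0 = ctrmx A0 *m (invmx (A0 *m ctrmx A0) *m A0) by rewrite mulmxA.
have PE : P = ctrmx A *m invmx (A *m ctrmx A) *m A by [].
congr (_ + _); first by rewrite PE -mulmxA AQ0 !mulmxA.
by rewrite P0E mulmxA A0h mulmxBr QA sub0r mulNmx opprK mulmxA.
Qed.

Lemma l1norm_gram_sub (E : 'M[C]_(k, n)) :
  l1norm ((A0 + E) *m ctrmx (A0 + E) - A0 *m ctrmx A0)
  <= (2 * l1norm A0 + l1norm E) * l1norm E.
Proof.
have -> : (A0 + E) *m ctrmx (A0 + E) - A0 *m ctrmx A0 =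
          A0 *m ctrmx E + (E *m ctrmx A0 + E *m ctrmx E).
  by rewrite ctrmxD mulmxDl !mulmxDr [_ - _]addrC !addrA addNr add0r.
apply: le_trans (l1normD _ _) _; apply: le_trans (lerD (lexx _) (l1normD _ _)) _.
apply: le_trans (lerD (l1normM _ _) (lerD (l1normM _ _) (l1normM _ _))) _.
rewrite !l1norm_ctrmx; lra.
Qed.

Lemma l1norm_invmx_gram_addr (E : 'M[C]_(k, n)) : row_free (A0 + E) ->
  l1norm E * (2 * ((2 * l1norm A0 + 1) * l1norm (invmx (A0 *m ctrmx A0))) + 1) <= 1 ->
  l1norm (invmx ((A0 + E) *m ctrmx (A0 + E))) <= 2 * l1norm (invmx (A0 *m ctrmx A0)).
Proof.
move=> fA small; apply: l1norm_invmx_perturb; rewrite ?gram_unitmx //.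
have [e0 g0] := (l1norm_ge0 E, l1norm_ge0 (invmx (A0 *m ctrmx A0))).
apply: le_trans (ler_wpM2r g0 (l1norm_gram_sub E)) _.
have := l1norm_ge0 A0; have : 0 <= l1norm E * l1norm (invmx (A0 *m ctrmx A0)).
  exact: mulr_ge0.
nra.
Qed.

Lemma orthoproj_lipschitz : exists c eps : R, 0 < c /\ 0 < eps /\
  forall E, row_free (A0 + E) -> l1norm E <= eps ->
    l1norm (orthoproj (A0 + E) - P0) <= c * l1norm E.
Proof.
set G0 := A0 *m ctrmx A0; set p := l1norm A0; set g := l1norm (invmx G0).
set q := l1norm (1%:M - P0); set h := l1norm (invmx G0 *m A0).
have [p0 g0 q0 h0] : [/\ 0 <= p, 0 <= g, 0 <= q & 0 <= h] by split; apply: l1norm_ge0.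
set t := 2 * ((2 * p + 1) * g) + 1; have t1 : 1 <= t by rewrite /t; nra.
have t_gt0 : 0 < t by lra.
set a := p + 1; set b := n%:R + a * (2 * g) * a.
have a0 : 0 <= a by rewrite /a; lra.
have b0 : 0 <= b by rewrite addr_ge0 ?ler0n // !mulr_ge0 //; lra.
have c0 : 0 <= a * (2 * g) * q + b * h by rewrite addr_ge0 // !mulr_ge0 //; lra.
exists (a * (2 * g) * q + b * h + 1), t^-1; split; first lra.
split=> [|E fA]; first by rewrite invr_gt0.
rewrite -[t^-1]div1r ler_pdivlMr // => small; set e := l1norm E in small *.
have e0 : 0 <= e := l1norm_ge0 E.
have e1 : e <= 1 by nra.
set A := A0 + E; set G := A *m ctrmx A.
have nA : l1norm A <= a by apply: le_trans (l1normD _ _) _; rewrite lerD2l.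
have nGi : l1norm (invmx G) <= 2 * g := l1norm_invmx_gram_addr fA small.
have nQ : l1norm (1%:M - orthoproj A) <= b.
  apply: le_trans (l1norm_orthoproj_compl A) _; rewrite lerD2l.
  by rewrite ler_pM ?mulr_ge0 ?l1norm_ge0 // ler_pM ?l1norm_ge0.
rewrite orthoproj_addr_sub //; apply: le_trans (l1normD _ _) _.
have T1 : l1norm (ctrmx A *m invmx G *m E *m (1%:M - P0)) <= a * (2 * g) * e * q.
  apply: le_trans (l1normM _ _) _; rewrite ler_wpM2r //.
  apply: le_trans (l1normM3 _ _ _) _; rewrite l1norm_ctrmx ler_wpM2r //.
  by rewrite ler_pM ?l1norm_ge0.
have T2 : l1norm ((1%:M - orthoproj A) *m ctrmx E *m (invmx G0 *m A0)) <= b * e * h.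
  by apply: le_trans (l1normM3 _ _ _) _; rewrite l1norm_ctrmx !ler_wpM2r.
apply: le_trans (lerD T1 T2) _; nra.
Qed.

Lemma l1norm_mul_orthoproj_compl (E : 'M[C]_(k, n)) : row_free (A0 + E) ->
  l1norm (E *m (1%:M - P0))
  <= l1norm (A0 + E) * l1norm (orthoproj (A0 + E) - P0) * l1norm (1%:M - P0).
Proof.
move=> fA; have Q0idem : (1%:M - P0) *m (1%:M - P0) = 1%:M - P0.
  by rewrite mulmxBl mul1mx mulmxBr mulmx1 orthoproj_idem // subrr subr0.
suff <- : (A0 + E) *m (orthoproj (A0 + E) - P0) *m (1%:M - P0) = E *m (1%:M - P0).
  exact: l1normM3.
have -> : (A0 + E) *m (orthoproj (A0 + E) - P0) = (A0 + E) *m (1%:M - P0).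
  by rewrite !mulmxBr mulmx_orthoproj // mulmx1.
by rewrite -mulmxA Q0idem mulmxDl mulmxBr mulmx_orthoproj // mulmx1 subrr add0r.
Qed.

End Perturbation.

Section Chart.
Variable R : realType.
Local Notation C := R[i].
Variables (d k : nat).
Hypothesis kd : (k <= d)%N.

(* For left-supported [Y], the row spaces of [(Y + Jmx) *m S] form the affine
   chart of k-planes around the span of the last [k] rows of [S]. *)
Definition Jmx : 'M[C]_(k, d) := \matrix_(r, j) (j == (d - k + r)%N :> nat)%:R.

Definition left_supported (Y : 'M[C]_(k, d)) :=
  forall r (j : 'I_d), (d - k <= j)%N -> Y r j = 0.

Lemma left_supported0 : left_supported 0.
Proof. by move=> r j _; rewrite mxE. Qed.

Lemma mulmx_Jmx_col_lt m (W : 'M[C]_(m, k)) l (j : 'I_d) :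
  (j < d - k)%N -> (W *m Jmx) l j = 0.
Proof.
move=> jlt; rewrite mxE big1 // => r _; rewrite mxE.
suff /negPf -> : (j : nat) != (d - k + r)%N by rewrite mulr0.
by apply: contraTneq jlt => ->; rewrite -leqNgt leq_addr.
Qed.

Lemma mulmx_chart_col m (W : 'M[C]_(m, k)) (Y : 'M[C]_(k, d)) l (r : 'I_k)
    (j : 'I_d) :
  left_supported Y -> j = (d - k + r)%N :> nat -> (W *m (Y + Jmx)) l j = W l r.
Proof.
move=> sY jE; rewrite mxE (bigD1 r) //= big1 => [|r' r'r];
  rewrite !mxE sY ?jE ?leq_addr //.
  by rewrite eqxx add0r mulr1 addr0.
by rewrite eqn_add2l (inj_eq val_inj) eq_sym (negPf r'r) add0r mulr0.
Qed.

Lemma row_free_chart (S : 'M[C]_d) (Y : 'M[C]_(k, d)) :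
  S \in unitmx -> left_supported Y -> row_free ((Y + Jmx) *m S).
Proof.
move=> uS sY; rewrite /row_free mxrankMfree ?row_free_unit //.
apply: inj_row_free => v vY0; apply/rowP => r.
have jr : (d - k + r < d)%N by have := ltn_ord r; lia.
by rewrite -(mulmx_chart_col v 0 (j := Ordinal jr) sY) // vY0 !mxE.
Qed.

Variable S : 'M[C]_d.
Hypothesis uS : S \in unitmx.
Local Notation A0 := (Jmx *m S).
Local Notation P0 := (orthoproj A0).

Lemma row_free_Jmx : row_free A0.
Proof. by have := row_free_chart uS left_supported0; rewrite add0r. Qed.

Lemma chart_lipschitz : exists c eps : R, 0 < c /\ 0 < eps /\
  forall Y, left_supported Y -> l1norm Y <= eps ->
    l1norm (orthoproj ((Y + Jmx) *m S) - P0) <= c * l1norm Y.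
Proof.
have [c [eps [c0 [eps0 lip]]]] := orthoproj_lipschitz row_free_Jmx.
set s := l1norm S; have s0 : 0 <= s := l1norm_ge0 S.
exists (c * (s + 1)), (eps / (s + 1)).
split; first by rewrite mulr_gt0 //; lra.
split; first by rewrite divr_gt0 //; lra.
move=> Y sY; rewrite ler_pdivlMr; last lra.
move=> Ys; have Y0 := l1norm_ge0 Y.
have YS : l1norm (Y *m S) <= l1norm Y * s := l1normM Y S.
have fYS : row_free (A0 + Y *m S) by rewrite addrC -mulmxDl row_free_chart.
rewrite mulmxDl [Y *m S + _]addrC; apply: le_trans (lip _ fYS _) _.
  by apply: le_trans YS _; nra.
by rewrite -mulrA (ler_wpM2l (ltW c0)); nra.
Qed.

Lemma l1norm_le_chart_compl (Y : 'M[C]_(k, d)) : left_supported Y ->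
  l1norm Y <= l1norm (Y *m S *m (1%:M - P0) *m invmx S).
Proof.
move=> sY.
set W := Y *m S *m ctrmx A0 *m invmx (A0 *m ctrmx A0).
have -> : Y *m S *m (1%:M - P0) *m invmx S = Y - W *m Jmx.
  by rewrite mulmxBr mulmx1 mulmxBl mulmxK // /orthoproj !mulmxA mulmxK.
apply: ler_sum => r _; apply: ler_sum => j _.
case: (ltnP j (d - k)) => [jlt | jge]; last by rewrite sY // cabs0 cabs_ge0.
by rewrite mxE [X in _ + X]mxE mulmx_Jmx_col_lt // subr0.
Qed.

Lemma chart_colipschitz : exists c del : R, 0 < c /\ 0 < del /\
  forall Y, left_supported Y ->
    l1norm (orthoproj ((Y + Jmx) *m S) - P0) <= del ->
    l1norm Y <= c * l1norm (orthoproj ((Y + Jmx) *m S) - P0).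
Proof.
set s := l1norm S; set p := l1norm A0.
set x := l1norm (1%:M - P0) * l1norm (invmx S).
have [s0 p0 x0] : [/\ 0 <= s, 0 <= p & 0 <= x].
  by split; rewrite ?mulr_ge0 ?l1norm_ge0.
exists (2 * p * x + 1), (2 * s * x + 1)^-1.
split; first by have := mulr_ge0 p0 x0; lra.
split; first by rewrite invr_gt0; have := mulr_ge0 s0 x0; lra.
move=> Y sY; set D := l1norm _.
have D0 : 0 <= D := l1norm_ge0 _.
rewrite -[_^-1]div1r ler_pdivlMr; last by have := mulr_ge0 s0 x0; lra.
move=> smallD; set z := l1norm Y; have z0 : 0 <= z := l1norm_ge0 Y.
have zD : z <= (p + z * s) * D * x.
  apply: le_trans (l1norm_le_chart_compl sY) _.
  apply: le_trans (l1normM _ _) _; rewrite mulrA ler_wpM2r ?l1norm_ge0 //.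
  apply: le_trans (l1norm_mul_orthoproj_compl row_free_Jmx _) _.
    by rewrite addrC -mulmxDl row_free_chart.
  rewrite [A0 + _]addrC -mulmxDl -/D ler_wpM2r ?l1norm_ge0 // ler_wpM2r //.
  rewrite mulmxDl addrC; apply: le_trans (l1normD _ _) _.
  by rewrite lerD2l l1normM.
(* Absorb the [z] on the right of [zD], using [s x D <= 1/2]. *)
have : 0 <= z * (1 - 2 * (s * x * D)) by rewrite mulr_ge0 //; nra.
nra.
Qed.

End Chart.

Section AdaptedBasis.
Variable R : realType.
Local Notation C := R[i].
Variable d : nat.

Lemma flag_mono (F : flag R d) : is_flag F ->
  forall a b, (a <= b <= d)%N -> (F a <= F b)%MS.
Proof.
move=> [_ F_sub] a b /andP [ab bd]; elim: b ab bd => [|b IH] ab bd.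
  by move: ab; rewrite leqn0 => /eqP ->.
move: ab; rewrite leq_eqVlt => /orP [/eqP -> //|ab].
exact: submx_trans (IH ab (ltnW bd)) (F_sub b bd).
Qed.

Lemma mxrank_flag (F : flag R d) j : is_flag F -> (j <= d)%N -> \rank (F j) = j.
Proof. by move=> [F_rank _]; apply: F_rank. Qed.

Lemma mxrank_sum_le n (I : Type) (r : seq I) (P : pred I) (A : I -> 'M[C]_n) :
  (\rank (\sum_(i <- r | P i) A i)%MS <= \sum_(i <- r | P i) \rank (A i))%N.
Proof.
elim/big_rec2: _ => [|i m1 m2 _ IH]; first by rewrite mxrank0.
apply: leq_trans (mxrank_adds_leqif _ _).1 _.
by rewrite leq_add2l.
Qed.

Variables (F1 F2 : flag R d).
Hypotheses (isF1 : is_flag F1) (isF2 : is_flag F2) (tr12 : transverse F1 F2).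

Lemma capmx_transverse m : (m <= d)%N -> (F2 m :&: F1 (d - m)%N)%MS = 0.
Proof.
move=> md; apply/eqP; rewrite -mxrank_eq0 capmxC.
have := mxrank_sum_cap (F1 (d - m)%N) (F2 m).
have /eqP := tr12 (leq_subr m d); rewrite subKn // => ->.
rewrite !mxrank_flag ?leq_subr // subnK //; lia.
Qed.

Lemma mxrank_Lline i : (1 <= i <= d)%N -> \rank (Lline F1 F2 i) = 1%N.
Proof.
move=> /andP [i1 id]; have := mxrank_sum_cap (F2 i) (F1 (d - i)%N.+1).
have -> : \rank (F2 i + F1 (d - i)%N.+1)%MS = d.
  apply/eqP; rewrite eqn_leq rank_leq_col /=.
  have /eqP full := tr12 (leq_subr i d); rewrite subKn // in full.
  rewrite -{1}full addsmxC mxrankS // addsmxS // flag_mono //; lia.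
rewrite /Lline (mxrank_flag isF2) // (mxrank_flag isF1); lia.
Qed.

Lemma flag2_sub_sum_Lline m : (m <= d)%N ->
  (F2 m <= \sum_(i < m) Lline F1 F2 i.+1)%MS.
Proof.
elim: m => [|m IH] md.
  by rewrite big_ord0 submx0 -mxrank_eq0 mxrank_flag.
rewrite big_ord_recr /=; set Sm := (\sum_(i < m) _)%MS.
have Sm_F2 : (Sm :=: F2 m)%MS.
  apply/eqmxP/andP; split; last exact: IH (ltnW md).
  apply/sumsmx_subP => i _; apply: submx_trans (capmxSl _ _) _.
  by rewrite flag_mono //; have := ltn_ord i; lia.
have S_sub : (Sm + Lline F1 F2 m.+1 <= F2 m.+1)%MS.
  by rewrite addsmx_sub capmxSl Sm_F2 flag_mono // leqnSn.
have cap0 : (Sm :&: Lline F1 F2 m.+1)%MS = 0.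
  apply/eqP; rewrite -submx0 -(capmx_transverse (ltnW md)).
  by apply: capmxS; [rewrite Sm_F2 | rewrite /Lline subnSK // capmxSr].
rewrite -(mxrank_leqif_sup S_sub) mxrank_flag //.
have := mxrank_sum_cap Sm (Lline F1 F2 m.+1).
rewrite cap0 mxrank0 addn0 mxrank_Lline ?md // Sm_F2.
by rewrite mxrank_flag ?(ltnW md) // addn1 => ->.
Qed.

(* Row [i] of [Lbasis] spans the line [L_(i+1)] (rows are numbered from 0). *)
Definition Lbasis : 'M[C]_d := \matrix_(i < d) nz_row (Lline F1 F2 i.+1).

Lemma mxrank_Lline_ord (i : 'I_d) : \rank (Lline F1 F2 i.+1) = 1%N.
Proof. by apply: mxrank_Lline; have := ltn_ord i; lia. Qed.

Lemma row_Lbasis_sub (i : 'I_d) : (row i Lbasis <= Lline F1 F2 i.+1)%MS.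
Proof. by rewrite rowK nz_row_sub. Qed.

Lemma row_Lbasis_neq0 (i : 'I_d) : row i Lbasis != 0.
Proof. by rewrite rowK nz_row_eq0 -mxrank_eq0 mxrank_Lline_ord. Qed.

Lemma Lline_sub_row (i : 'I_d) : (Lline F1 F2 i.+1 <= row i Lbasis)%MS.
Proof.
by rewrite -(mxrank_leqif_sup (row_Lbasis_sub i)) mxrank_Lline_ord rank_rV row_Lbasis_neq0.
Qed.

Lemma flag2_sub_pid m : (m <= d)%N -> (F2 m <= (pid_mx m : 'M[C]_d) *m Lbasis)%MS.
Proof.
move=> md; apply: submx_trans (flag2_sub_sum_Lline md) _.
apply/sumsmx_subP => i _; have id : (i < d)%N by apply: leq_trans (ltn_ord i) md.
apply: submx_trans (Lline_sub_row (Ordinal id)) _.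
have -> : row (Ordinal id) Lbasis = row (Ordinal id) ((pid_mx m : 'M[C]_d) *m Lbasis).
  rewrite row_mul; have -> : row (Ordinal id) (pid_mx m : 'M[C]_d) = row (Ordinal id) 1%:M.
    by apply/rowP => l; rewrite !mxE /= ltn_ord andbT.
  by rewrite -row_mul mul1mx.
exact: row_sub.
Qed.

Lemma Lbasis_unit : Lbasis \in unitmx.
Proof.
rewrite -row_full_unit -sub1mx -[X in (_ <= X)%MS]mul1mx -pid_mx_1.
apply: submx_trans _ (flag2_sub_pid (leqnn d)).
by rewrite pid_mx_1 sub1mx /row_full mxrank_flag.
Qed.

Lemma row_Jmx_mul k (A : 'M[C]_d) (r : 'I_k) (j : 'I_d) :
  j = (d - k + r)%N :> nat -> row r (Jmx R d k *m A) = row j A.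
Proof.
move=> jE; rewrite row_mul; have -> : row r (Jmx R d k) = row j 1%:M.
  by apply/rowP => l; rewrite !mxE /= -jE eq_sym.
by rewrite -row_mul mul1mx.
Qed.

Lemma Jmx_Lbasis_eq_flag1 k : (k <= d)%N -> (Jmx R d k *m Lbasis == F1 k)%MS.
Proof.
move=> kd; have S_sub : (Jmx R d k *m Lbasis <= F1 k)%MS.
  apply/row_subP => r; have jd : (d - k + r < d)%N by have := ltn_ord r; lia.
  rewrite (@row_Jmx_mul k Lbasis r (Ordinal jd) erefl).
  apply: submx_trans (row_Lbasis_sub _) (submx_trans (capmxSr _ _) _).
  by rewrite flag_mono //=; have := ltn_ord r; lia.
by rewrite -(mxrank_leqif_eq S_sub) mxrank_flag // (eqP (row_free_Jmx kd Lbasis_unit)).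
Qed.

Variables (B : 'M[C]_d) (mu : nat -> C).
Hypothesis uB : B \in unitmx.
Hypothesis eigB : forall i, (1 <= i <= d)%N -> eigval_on B (Lline F1 F2 i) (mu i).

Lemma row_Lbasis_eigen (i : 'I_d) : row i Lbasis *m B^T = mu i.+1 *: row i Lbasis.
Proof. by apply: eigB; [have := ltn_ord i; lia | exact: row_Lbasis_sub]. Qed.

Lemma eigval_neq0 (i : 'I_d) : mu i.+1 != 0.
Proof.
apply/eqP => mu0; have /eqP := row_Lbasis_eigen i.
rewrite mu0 scale0r mulmx_free_eq0 ?row_free_unit ?unitmx_tr //.
by rewrite (negPf (row_Lbasis_neq0 i)).
Qed.

Lemma Lbasis_invmx_tr :
  Lbasis *m (invmx B)^T = diag_mx (\row_j (mu j.+1)^-1) *m Lbasis.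
Proof.
apply/row_matrixP => i; rewrite row_mul mul_diag_mx.
have -> : row i (\matrix_(k, j) ((\row_j (mu j.+1)^-1) 0 k * Lbasis k j)) =
          (mu i.+1)^-1 *: row i Lbasis by apply/rowP => j; rewrite !mxE.
have e : row i Lbasis = mu i.+1 *: (row i Lbasis *m (invmx B)^T).
  by rewrite scalemxAl -row_Lbasis_eigen -mulmxA -trmx_mul mulVmx // trmx1 mulmx1.
by rewrite {2}e scalerA mulVf ?eigval_neq0 // scale1r.
Qed.

End AdaptedBasis.

Section FlagCharts.
Variable R : realType.
Local Notation C := R[i].
Variable d : nat.
Variables (F1 F2 F3 : flag R d).
Hypotheses (isF1 : is_flag F1) (isF2 : is_flag F2) (isF3 : is_flag F3).
Hypotheses (tr12 : transverse F1 F2) (tr23 : transverse F2 F3).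
Local Notation S := (Lbasis F1 F2).
Local Notation Jmx k := (Jmx R d k).

Lemma flag3_chart k : (k <= d)%N -> exists X : 'M[C]_(k, d),
  left_supported X /\ ((X + Jmx k) *m S == F3 k)%MS.
Proof.
move=> kd; have uS := Lbasis_unit isF1 isF2 tr12.
have : (Jmx k *m S <= F2 (d - k)%N + F3 k)%MS.
  by rewrite submx_full //; have := tr23 (leq_subr k d); rewrite subKn.
case/sub_addsmxP => [[u1 u2] /= JS].
have /submxP [V V_F2] : (u1 *m F2 (d - k)%N <= (pid_mx (d - k) : 'M[C]_d) *m S)%MS.
  exact: submx_trans (submxMl _ _) (flag2_sub_pid isF1 isF2 tr12 (leq_subr k d)).
set X := - (V *m (pid_mx (d - k) : 'M[C]_d)).
have sX : left_supported X.
  move=> r j jge; rewrite /X !mxE big1 ?oppr0 // => l _; rewrite !mxE.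
  by case: eqP => [->|_]; rewrite ?ltnNge ?jge ?andbF mulr0.
exists X; split => //.
have XJ : (X + Jmx k) *m S = u2 *m F3 k.
  by rewrite mulmxDl JS /X mulNmx -mulmxA -V_F2 addKr.
have X_F3 : ((X + Jmx k) *m S <= F3 k)%MS by rewrite XJ submxMl.
rewrite -(mxrank_leqif_eq X_F3) mxrank_flag //.
by rewrite (eqP (row_free_chart kd uS sX)).
Qed.

Lemma sum_Lline_neqE i : (\sum_(1 <= j < d.+1 | j != i) Lline F1 F2 j)%MS =
  (\sum_(j < d | j.+1 != i) Lline F1 F2 j.+1)%MS.
Proof. by rewrite big_add1 /= big_mkord. Qed.

Lemma capmx_Lline_sum i : (1 <= i <= d)%N ->
  (Lline F1 F2 i :&: \sum_(1 <= j < d.+1 | j != i) Lline F1 F2 j)%MS = 0.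
Proof.
case: i => [//|i] /= id; rewrite sum_Lline_neqE.
set Sg := (\sum_(j < d | _) _)%MS.
have rankSg : (\rank Sg <= d.-1)%N.
  apply: leq_trans (mxrank_sum_le _ _ _) _.
  rewrite (eq_bigr (fun _ => 1%N)) => [|j _]; last exact: mxrank_Lline_ord.
  by rewrite sum1_card (@eq_card _ _ (predC1 (Ordinal id))) ?cardC1 ?card_ord.
have full : \rank (Lline F1 F2 i.+1 + Sg)%MS = d.
  apply/eqP; rewrite eqn_leq rank_leq_col -{1}(mxrank_flag isF2 (leqnn d)) mxrankS //.
  apply: submx_trans (flag2_sub_sum_Lline isF1 isF2 tr12 (leqnn d)) _.
  apply/sumsmx_subP => j _; case: (eqVneq (j : nat) i) => [->|ji]; first exact: addsmxSl.
  by apply: submx_trans (addsmxSr _ _); apply: (sumsmx_sup j).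
have := mxrank_sum_cap (Lline F1 F2 i.+1) Sg.
rewrite full mxrank_Lline // => rank_cap.
by apply/eqP; rewrite -mxrank_eq0; apply/eqP; lia.
Qed.

Lemma sub_sum_Lline_neq m (W : 'M[C]_(m, d)) i :
  (forall l (j : 'I_d), j.+1 = i -> W l j = 0) ->
  (W *m S <= \sum_(1 <= j < d.+1 | j != i) Lline F1 F2 j)%MS.
Proof.
move=> W0; rewrite sum_Lline_neqE; apply/row_subP => l.
rewrite row_mul mulmx_sum_row; apply: summx_sub => j _.
case: (eqVneq j.+1 i) => [ji | ji]; first by rewrite mxE W0 // scale0r sub0mx.
apply: scalemx_sub; apply: submx_trans (row_Lbasis_sub _ _ j) _.
exact: (sumsmx_sup j).
Qed.

Lemma mulmx_pid_col_ge m n (W : 'M[C]_(m, n)) p l (j : 'I_n) :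
  (p <= j)%N -> (W *m pid_mx p) l j = 0.
Proof.
move=> pj; rewrite mxE big1 // => r _; rewrite mxE.
by case: eqP => [->|_]; rewrite ?ltnNge ?pj ?andbF mulr0.
Qed.

(* With [i = d - k], [X r0 j0] couples [L_(i+1)] with [L_i] in the chart of
   [F3^k]; [B^-1] scales it by [mu_(i+1) / mu_i], so its nonvanishing is what
   bounds that ratio by the distance of the flags. *)
Lemma chart_entry_neq0 k (X : 'M[C]_(k, d)) (r0 : 'I_k) (j0 : 'I_d) :
  (0 < k < d)%N -> left_supported X -> ((X + Jmx k) *m S == F3 k)%MS ->
  ((F2 (d - k)%N.+1 :&: F3 k) *m Lproj F1 F2 (d - k) == Lline F1 F2 (d - k))%MS ->
  r0 = 0%N :> nat -> j0 = (d - k).-1 :> nat -> X r0 j0 != 0.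
Proof.
(* If the entry vanished, [M = F2^(i+1) :&: F3^k] would lie in the sum of
   the [L_j], [j != i], which [pi_i] kills. *)
move=> /andP [k0 kd] sX X_F3 star r00 j0E; apply/eqP => X0.
set i := (d - k)%N in star; set M := (F2 i.+1 :&: F3 k)%MS in star.
have uS := Lbasis_unit isF1 isF2 tr12.
have /submxP [Cm MC] : (M <= (X + Jmx k) *m S)%MS.
  by apply: submx_trans (capmxSr _ _) _; case/andP: X_F3.
have /submxP [Dm MD] : (M <= (pid_mx i.+1 : 'M[C]_d) *m S)%MS.
  by apply: submx_trans (capmxSl _ _) (flag2_sub_pid isF1 isF2 tr12 _); lia.
have CD : Cm *m (X + Jmx k) = Dm *m pid_mx i.+1.
  have fS : row_free S by rewrite row_free_unit.
  by apply: (row_free_inj fS); rewrite -!mulmxA -MC -MD.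
have Cm0 l (r : 'I_k) : (0 < r)%N -> Cm l r = 0.
  move=> r_gt0; have jr : (d - k + r < d)%N by have := ltn_ord r; lia.
  rewrite -(mulmx_chart_col Cm l (j := Ordinal jr) sX) // CD.
  by rewrite mulmx_pid_col_ge //= /i; lia.
have CXJ0 l (j : 'I_d) : j.+1 = i -> (Cm *m (X + Jmx k)) l j = 0.
  rewrite /i => ji; rewrite mxE big1 // => r _; rewrite !mxE.
  have /negPf -> : (j : nat) != (d - k + r)%N by lia.
  rewrite addr0; case: (posnP r) => [r_eq0 | r_gt0]; last by rewrite Cm0 ?mul0r.
  have -> : j = j0 by apply: val_inj; rewrite /= j0E; lia.
  have -> : r = r0 by apply: val_inj; rewrite /= r_eq0 r00.
  by rewrite X0 mulr0.
have M_proj0 : M *m Lproj F1 F2 i = 0.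
  apply: proj_mx_0; first by apply: capmx_Lline_sum; rewrite /i; lia.
  by rewrite MC mulmxA; apply: sub_sum_Lline_neq.
move: star; rewrite M_proj0 => /andP [_]; rewrite submx0 -mxrank_eq0.
by rewrite mxrank_Lline // /i; lia.
Qed.

End FlagCharts.

(* The chart coordinates of [B^-1 . U] when [U] has coordinates [X] (see
   [chart_invmx_act]). *)
Definition rescale_chart (R : realType) d k (X : 'M[R[i]]_(k, d)) (mu : nat -> R[i]) :
  'M[R[i]]_(k, d) := \matrix_(r, j) (X r j * mu (d - k + r).+1 / mu j.+1).

Section Rescale.
Variable R : realType.
Local Notation C := R[i].
Variable d : nat.
Variables (F1 F2 : flag R d).
Hypotheses (isF1 : is_flag F1) (isF2 : is_flag F2) (tr12 : transverse F1 F2).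
Variables (B : 'M[C]_d) (mu : nat -> C).
Hypothesis uB : B \in unitmx.
Hypothesis eigB : forall i, (1 <= i <= d)%N -> eigval_on B (Lline F1 F2 i) (mu i).
Local Notation S := (Lbasis F1 F2).

Lemma left_supported_rescale k (X : 'M[C]_(k, d)) :
  left_supported X -> left_supported (rescale_chart X mu).
Proof. by move=> sX r j jge; rewrite mxE sX // !mul0r. Qed.

Lemma row_full_diag n (u : 'rV[C]_n) : (forall j, u 0 j != 0) -> row_full (diag_mx u).
Proof.
move=> u_neq0; rewrite row_full_unit unitmxE det_diag unitfE.
by apply/prodf_neq0 => j _; apply: u_neq0.
Qed.

Lemma chart_invmx_act k (X : 'M[C]_(k, d)) (U : 'M[C]_d) :
  (k <= d)%N -> left_supported X -> ((X + Jmx R d k) *m S == U)%MS ->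
  (act (invmx B) U == (rescale_chart X mu + Jmx R d k) *m S)%MS.
Proof.
move=> kd sX XU; have mu_neq0 := eigval_neq0 isF1 isF2 tr12 uB eigB.
have mu_row_neq0 (r : 'I_k) : mu (d - k + r).+1 != 0.
  have rd : (d - k + r < d)%N by have := ltn_ord r; lia.
  exact: (mu_neq0 (Ordinal rd)).
set u : 'rV[C]_k := \row_r mu (d - k + r).+1.
set w : 'rV[C]_d := \row_j (mu j.+1)^-1.
have -> : rescale_chart X mu + Jmx R d k = diag_mx u *m ((X + Jmx R d k) *m diag_mx w).
  rewrite mul_mx_diag mul_diag_mx; apply/matrixP => r j; rewrite !mxE.
  case: (eqVneq (j : nat) (d - k + r)%N) => [jE | jE] /=.
    by rewrite sX ?jE ?leq_addr // !mul0r !add0r mul1r -jE mulfV.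
  by rewrite mulr0n !addr0 mulrCA mulrA.
rewrite -!mulmxA -(Lbasis_invmx_tr isF1 isF2 tr12 uB eigB).
rewrite [in X in diag_mx u *m X]mulmxA /act.
apply/eqmxP; apply: eqmx_trans (eqmxMr _ (eqmx_sym (eqmxP XU))) _.
apply: eqmx_sym; apply: eqmxMfull; apply: row_full_diag => r.
by rewrite mxE.
Qed.

End Rescale.

Section RatioBounds.
Variable R : realType.
Local Notation C := R[i].
Variables (d : nat) (mu : nat -> C).

Lemma max_ratio_ge0 : 0 <= max_ratio d mu.
Proof. exact: bigmax_ge_id. Qed.

Lemma ratio_le_max_ratio i : (1 <= i < d)%N -> cabs (mu i.+1 / mu i) <= max_ratio d mu.
Proof.
move=> id; apply: (@le_bigmax_seq _ _ _ _ 0 i xpredT (fun i => cabs (mu i.+1 / mu i))).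
  by rewrite mem_index_iota.
by [].
Qed.

Hypothesis mu_neq0 : forall i : 'I_d, mu i.+1 != 0.

Lemma ratio_telescope b n : max_ratio d mu <= 1 -> (1 <= b)%N -> (b + n.+1 <= d)%N ->
  cabs (mu (b + n.+1) / mu b) <= max_ratio d mu.
Proof.
move=> M1 b1; elim: n => [|n IH] bnd; first by rewrite addn1 ratio_le_max_ratio //; lia.
have -> : mu (b + n.+2) / mu b = mu (b + n.+1).+1 / mu (b + n.+1) * (mu (b + n.+1) / mu b).
  have bnd' : (b + n < d)%N by lia.
  by rewrite mulrA mulfVK ?addnS // (mu_neq0 (Ordinal bnd')).
have r1 : cabs (mu (b + n.+1).+1 / mu (b + n.+1)) <= max_ratio d mu.
  by apply: ratio_le_max_ratio; lia.
have r2 : cabs (mu (b + n.+1) / mu b) <= max_ratio d mu by apply: IH; lia.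
rewrite cabsM; apply: le_trans (ler_pM (cabs_ge0 _) (cabs_ge0 _) r1 r2) _.
by rewrite -[X in _ <= X]mulr1 ler_wpM2l ?max_ratio_ge0.
Qed.

Lemma l1norm_rescale_le k (X : 'M[C]_(k, d)) : (k <= d)%N -> left_supported X ->
  max_ratio d mu <= 1 -> l1norm (rescale_chart X mu) <= l1norm X * max_ratio d mu.
Proof.
move=> kd sX M1; rewrite /l1norm mulr_suml; apply: ler_sum => r _.
rewrite mulr_suml; apply: ler_sum => j _.
case: (ltnP j (d - k)) => jlt; last by rewrite mxE sX // !mul0r cabs0 mul0r.
rewrite mxE -mulrA cabsM ler_wpM2l ?cabs_ge0 //.
have -> : ((d - k + r).+1 = j.+1 + (d - k + r - j.+1).+1)%N by lia.
by apply: ratio_telescope => //; have := ltn_ord r; lia.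
Qed.

End RatioBounds.

Lemma in_Stab_unitmx (R : realType) d (F1 F2 : flag R d) (B : 'M[R[i]]_d) :
  in_Stab F1 F2 B -> B \in unitmx.
Proof. by case=> detB _; rewrite unitmxE detB unitr1. Qed.

Lemma uniform_constants (R : realType) (m : nat) (P : nat -> R -> R -> Prop) :
  (forall k c c' e e', 0 < e' -> c <= c' -> e' <= e -> P k c e -> P k c' e') ->
  (forall k, (k < m)%N -> exists c e, 0 < c /\ 0 < e /\ P k c e) ->
  exists c e, 0 < c /\ 0 < e /\ forall k, (k < m)%N -> P k c e.
Proof.
move=> P_mono; elim: m => [|m IH] Pm; first by exists 1, 1.
have [c1 [e1 [c1_gt0 [e1_gt0 P1]]]] := IH (fun k km => Pm k (ltnW km)).
have [c2 [e2 [c2_gt0 [e2_gt0 P2]]]] := Pm m (ltnSn m).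
have e_gt0 : 0 < Num.min e1 e2 by rewrite lt_min e1_gt0.
exists (Num.max c1 c2), (Num.min e1 e2); split; first by rewrite lt_max c1_gt0.
split=> // k; rewrite ltnS leq_eqVlt => /orP [/eqP -> | km].
  by apply: P_mono P2 => //; rewrite ?le_max ?ge_min lexx ?orbT.
by apply: P_mono (P1 k km) => //; rewrite ?le_max ?ge_min lexx.
Qed.

Lemma distF_ge0 (R : realType) d (F G : flag R d) : 0 <= distF F G.
Proof. by apply: sumr_ge0 => j _; apply: frob_ge0. Qed.

Section Estimates.
Variable R : realType.
Local Notation C := R[i].
Variable d : nat.
Variables (F1 F2 F3 : flag R d).
Hypotheses (isF1 : is_flag F1) (isF2 : is_flag F2) (isF3 : is_flag F3).
Hypothesis star : property_star F1 F2 F3.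
Let tr12 : transverse F1 F2 := star.1.
Let tr23 : transverse F2 F3 := star.2.1.
Local Notation S := (Lbasis F1 F2).
Local Notation Jmx k := (Jmx R d k).
Local Notation eigen B mu :=
  (forall i, (1 <= i <= d)%N -> eigval_on B (Lline F1 F2 i) (mu i)).

Definition distF_term (B : 'M[C]_d) k :=
  frob (oproj (act (invmx B) (F3 k)) - oproj (F1 k)).

Lemma distF_term_ge0 B k : 0 <= distF_term B k.
Proof. exact: frob_ge0. Qed.

Lemma distF_term_le_distF B (k : 'I_d.+1) :
  distF_term B k <= distF (act_flag (invmx B) F3) F1.
Proof.
apply: (@ler_sum_term _ _ (fun j : 'I_d.+1 => distF_term B j)).
exact: distF_term_ge0.
Qed.

Lemma distF_term_chart B mu k (X : 'M[C]_(k, d)) :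
  in_Stab F1 F2 B -> eigen B mu -> (k <= d)%N ->
  left_supported X -> ((X + Jmx k) *m S == F3 k)%MS ->
  distF_term B k =
    frob (orthoproj ((rescale_chart X mu + Jmx k) *m S) - orthoproj (Jmx k *m S)).
Proof.
move=> hB eigB kd sX X_F3; have uS := Lbasis_unit isF1 isF2 tr12.
rewrite /distF_term (oprojE (row_free_Jmx kd uS) (Jmx_Lbasis_eq_flag1 isF1 isF2 tr12 kd)).
rewrite (oprojE (row_free_chart kd uS (left_supported_rescale mu sX))) //.
apply/eqmxP/eqmx_sym/eqmxP.
exact: (chart_invmx_act isF1 isF2 tr12 (in_Stab_unitmx hB) eigB kd sX X_F3).
Qed.

Definition upper_estimate k c eps := forall B mu, in_Stab F1 F2 B -> eigen B mu ->
  max_ratio d mu <= eps -> distF_term B k <= c * max_ratio d mu.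

Definition lower_estimate i c eps := (0 < i)%N -> forall B mu, in_Stab F1 F2 B ->
  eigen B mu -> distF_term B (d - i) <= eps ->
  cabs (mu i.+1 / mu i) <= c * distF_term B (d - i).

Lemma upper_estimate_mono k c c' eps eps' : 0 < eps' -> c <= c' -> eps' <= eps ->
  upper_estimate k c eps -> upper_estimate k c' eps'.
Proof.
move=> _ cc' ee' est B mu hB eigB M_le.
apply: le_trans (est B mu hB eigB (le_trans M_le ee')) _.
by rewrite ler_wpM2r ?max_ratio_ge0.
Qed.

Lemma lower_estimate_mono i c c' eps eps' : 0 < eps' -> c <= c' -> eps' <= eps ->
  lower_estimate i c eps -> lower_estimate i c' eps'.
Proof.
move=> _ cc' ee' est i_gt0 B mu hB eigB T_le.
apply: le_trans (est i_gt0 B mu hB eigB (le_trans T_le ee')) _.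
by rewrite ler_wpM2r ?distF_term_ge0.
Qed.

Lemma distF_term_le_max_ratio k : (k < d.+1)%N ->
  exists c eps : R, 0 < c /\ 0 < eps /\ upper_estimate k c eps.
Proof.
rewrite ltnS => kd; have [X [sX X_F3]] := flag3_chart isF1 isF2 isF3 tr12 tr23 kd.
have [c [eps [c_gt0 [eps_gt0 lip]]]] := chart_lipschitz kd (Lbasis_unit isF1 isF2 tr12).
set x := l1norm X + 1; have x_gt0 : 0 < x by rewrite /x ltr_wpDl ?l1norm_ge0.
exists (c * x), (Num.min 1 (eps / x)); split; first exact: mulr_gt0.
split; first by rewrite lt_min ltr01 divr_gt0.
move=> B mu hB eigB; rewrite le_min ler_pdivlMr // => /andP [M1 Mx].
have M0 := max_ratio_ge0 d mu.
have nY : l1norm (rescale_chart X mu) <= x * max_ratio d mu.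
  have mu_neq0 := eigval_neq0 isF1 isF2 tr12 (in_Stab_unitmx hB) eigB.
  apply: le_trans (l1norm_rescale_le mu_neq0 kd sX M1) _.
  by rewrite ler_wpM2r // lerDl.
rewrite (distF_term_chart hB eigB kd sX X_F3); apply: le_trans (frob_le_l1norm _) _.
apply: le_trans (lip _ (left_supported_rescale mu sX) _) _.
  by apply: le_trans nY _; rewrite mulrC.
by rewrite -mulrA (ler_wpM2l (ltW c_gt0)).
Qed.

Lemma ratio_le_distF_term i : (i < d)%N ->
  exists c del : R, 0 < c /\ 0 < del /\ lower_estimate i c del.
Proof.
case: (posnP i) => [-> _ | i_gt0 id]; first by exists 1, 1.
set k := (d - i)%N; have /andP [k_gt0 kd] : (0 < k < d)%N by rewrite /k; lia.
have [X [sX X_F3]] := flag3_chart isF1 isF2 isF3 tr12 tr23 (ltnW kd).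
have [c [del [c_gt0 [del_gt0 colip]]]] :=
  chart_colipschitz (ltnW kd) (Lbasis_unit isF1 isF2 tr12).
have jd : (i.-1 < d)%N by lia.
set r0 : 'I_k := Ordinal k_gt0; set j0 : 'I_d := Ordinal jd.
set x := cabs (X r0 j0); have x_gt0 : 0 < x.
  have [Xstar _] := star.2.2 i (introT andP (conj i_gt0 id)).
  rewrite lt_def cabs_ge0 andbT cabs_eq0 (chart_entry_neq0 isF1 isF2 tr12 _ sX X_F3) //.
    by rewrite k_gt0.
  by rewrite /k subKn ?(ltnW id).
  by rewrite /= /k; lia.
set dd : R := (d * d)%:R; have dd0 : 0 <= dd := ler0n _ _.
have dd1 : 0 < dd + 1 by lra.
exists (c * (dd + 1) / x), (del / (dd + 1)); split; first by rewrite !divr_gt0 ?mulr_gt0.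
split; first by rewrite divr_gt0.
move=> _ B mu hB eigB; set T := distF_term B k => small.
set Y := rescale_chart X mu.
pose N := l1norm (orthoproj ((Y + Jmx k) *m S) - orthoproj (Jmx k *m S)).
have NT : N <= dd * T.
  by rewrite /T (distF_term_chart hB eigB (ltnW kd) sX X_F3); apply: l1norm_le_frob.
have T0 : 0 <= T := distF_term_ge0 B k.
have Ndel : N <= del.
  apply: le_trans NT _; move: small; rewrite ler_pdivlMr; last lra.
  by nra.
have YX : cabs (Y r0 j0) = x * cabs (mu i.+1 / mu i).
  by rewrite mxE -mulrA cabsM /= addn0 subKn ?(ltnW id) // prednK.
suff : x * cabs (mu i.+1 / mu i) <= c * (dd + 1) * T.
  by move=> h; rewrite mulrAC ler_pdivlMr // mulrC.
rewrite -YX -mulrA; apply: le_trans (cabs_le_l1norm Y r0 j0) _.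
apply: le_trans (colip _ (left_supported_rescale mu sX) Ndel) _.
by apply: (ler_wpM2l (ltW c_gt0)); apply: le_trans NT _; nra.
Qed.

Lemma distF_le_max_ratio : exists c eps : R, 0 < c /\ 0 < eps /\
  forall B mu, in_Stab F1 F2 B -> eigen B mu -> max_ratio d mu <= eps ->
    distF (act_flag (invmx B) F3) F1 <= c * max_ratio d mu.
Proof.
have [c [eps [c_gt0 [eps_gt0 est]]]] :=
  uniform_constants upper_estimate_mono distF_term_le_max_ratio.
exists (d.+1%:R * c), eps; split; first by rewrite mulr_gt0.
split=> // B mu hB eigB small.
apply: le_trans (_ : \sum_(k < d.+1) c * max_ratio d mu <= _).
  by apply: ler_sum => k _; apply: (est k (ltn_ord k) B mu hB eigB small).
by rewrite sumr_const card_ord -mulrA mulr_natl.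
Qed.

Lemma max_ratio_le_distF : exists c eps : R, 0 < c /\ 0 < eps /\
  forall B mu, in_Stab F1 F2 B -> eigen B mu ->
    distF (act_flag (invmx B) F3) F1 <= eps ->
    max_ratio d mu <= c * distF (act_flag (invmx B) F3) F1.
Proof.
have [c [eps [c_gt0 [eps_gt0 est]]]] :=
  uniform_constants lower_estimate_mono ratio_le_distF_term.
exists c, eps; do 2!split=> //; move=> B mu hB eigB small.
rewrite /max_ratio big_seq_cond; apply: bigmax_le => [|i /andP []].
  exact: mulr_ge0 (ltW c_gt0) (distF_ge0 _ _).
rewrite mem_index_iota => /andP [i_gt0 id] _.
have ki : (d - i < d.+1)%N by lia.
have T_le := distF_term_le_distF B (Ordinal ki).
apply: le_trans (est i id i_gt0 B mu hB eigB (le_trans T_le small)) _.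
by apply: ler_wpM2l; [exact: ltW | exact: T_le].
Qed.

Lemma distF_max_ratio_comparable : exists K eps : R, 0 < K /\ 0 < eps /\
  forall B mu, in_Stab F1 F2 B -> eigen B mu ->
    (distF (act_flag (invmx B) F3) F1 <= eps ->
       max_ratio d mu <= K * distF (act_flag (invmx B) F3) F1) /\
    (max_ratio d mu <= eps ->
       distF (act_flag (invmx B) F3) F1 <= K * max_ratio d mu).
Proof.
have [cu [eu [cu_gt0 [eu_gt0 upper]]]] := distF_le_max_ratio.
have [cl [el [cl_gt0 [el_gt0 lower]]]] := max_ratio_le_distF.
exists (Num.max cu cl), (Num.min eu el); split; first by rewrite lt_max cu_gt0.
split; first by rewrite lt_min eu_gt0.
move=> B mu hB eigB; split; rewrite le_min => /andP [small_u small_l].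
  apply: le_trans (lower B mu hB eigB small_l) _.
  by rewrite ler_wpM2r ?distF_ge0 // le_max lexx orbT.
apply: le_trans (upper B mu hB eigB small_u) _.
by rewrite ler_wpM2r ?max_ratio_ge0 // le_max lexx.
Qed.

End Estimates.

Local Open Scope classical_set_scope.
Local Open Scope ring_scope.

Lemma cvg0_dominated (R : realType) (f g : nat -> R) (K eps : R) : 0 < eps ->
  (forall n, 0 <= f n) -> (forall n, g n <= eps -> f n <= K * g n) ->
  g @ \oo --> 0 -> f @ \oo --> 0.
Proof.
move=> eps_gt0 f_ge0 fg g0.
apply: (@squeeze_cvgr _ _ _ _ (fun=> 0) (fun n => K * g n)).
- near=> n; rewrite f_ge0 /=; apply: fg; near: n; exact: cvgr_le _ g0 _ eps_gt0.
- exact: cvg_cst.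
- by rewrite -(mulr0 K); apply: cvgMl_tmp.
Unshelve. all: end_near.
Qed.

Section ComparableSequences.
Variable R : realType.
Variables (u v : nat -> R) (K eps : R).
Hypotheses (K_gt0 : 0 < K) (eps_gt0 : 0 < eps).
Hypotheses (u_ge0 : forall n, 0 <= u n) (v_ge0 : forall n, 0 <= v n).
Hypothesis v_le_u : forall n, u n <= eps -> v n <= K * u n.
Hypothesis u_le_v : forall n, v n <= eps -> u n <= K * v n.

Lemma cvg0_comparable : u @ \oo --> 0 <-> v @ \oo --> 0.
Proof.
by split; [apply: cvg0_dominated eps_gt0 v_ge0 v_le_u |
           apply: cvg0_dominated eps_gt0 u_ge0 u_le_v].
Qed.

Lemma comparable_eventually : u @ \oo --> 0 ->
  exists N, forall n, (N <= n)%N -> K^-1 * v n <= u n /\ u n <= K * v n.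
Proof.
move=> u0; have v0 := cvg0_comparable.1 u0.
have [N _ small] : \forall n \near \oo, u n <= eps /\ v n <= eps.
  near=> n; split; near: n; first exact: cvgr_le _ u0 _ eps_gt0.
  exact: cvgr_le _ v0 _ eps_gt0.
exists N => n /small [small_u small_v]; split; last exact: u_le_v.
by rewrite ler_pdivrMl // v_le_u.
Unshelve. all: end_near.
Qed.

End ComparableSequences.

Theorem mainTheorem13 (R : realType) (d : nat) (F1 F2 F3 : flag R d) :
  is_flag F1 -> is_flag F2 -> is_flag F3 ->
  general_position F1 F2 F3 -> property_star F1 F2 F3 ->
  (forall (B : nat -> 'M[R[i]]_d) (mu : nat -> nat -> R[i]),
     (forall n, in_Stab F1 F2 (B n)) ->
     (forall n i, (1 <= i <= d)%N -> eigval_on (B n) (Lline F1 F2 i) (mu n i)) ->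
     ((fun n => distF (act_flag (invmx (B n)) F3) F1) @ \oo --> (0 : R)) <->
     ((fun n => max_ratio d (mu n)) @ \oo --> (0 : R)))
  /\
  (exists K : R, 0 < K /\
   forall (B : nat -> 'M[R[i]]_d) (mu : nat -> nat -> R[i]),
     (forall n, in_Stab F1 F2 (B n)) ->
     (forall n i, (1 <= i <= d)%N -> eigval_on (B n) (Lline F1 F2 i) (mu n i)) ->
     ((fun n => distF (act_flag (invmx (B n)) F3) F1) @ \oo --> (0 : R)) ->
     exists N : nat, forall n : nat, (N <= n)%N ->
       K^-1 * max_ratio d (mu n) <= distF (act_flag (invmx (B n)) F3) F1 /\
       distF (act_flag (invmx (B n)) F3) F1 <= K * max_ratio d (mu n)).
Proof.
move=> isF1 isF2 isF3 _ star.
have [K [eps [K_gt0 [eps_gt0 cmp]]]] := distF_max_ratio_comparable isF1 isF2 isF3 star.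
split=> [B mu hB eigB | ].
  apply: cvg0_comparable eps_gt0 _ _ _ _ => n.
  - exact: distF_ge0.
  - exact: max_ratio_ge0.
  - exact: (cmp _ _ (hB n) (eigB n)).1.
  - exact: (cmp _ _ (hB n) (eigB n)).2.
exists K; split=> // B mu hB eigB.
apply: comparable_eventually K_gt0 eps_gt0 _ _ _ _ => n.
- exact: distF_ge0.
- exact: max_ratio_ge0.
- exact: (cmp _ _ (hB n) (eigB n)).1.
- exact: (cmp _ _ (hB n) (eigB n)).2.
Qed.
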